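(* Let $\iota:\mathcal{F}\to\mathcal{F}_{quad}$ be the precomposition functor $\iota(F)=F\circ\epsilon$, where $\epsilon:\mathcal{T}_q\to\mathcal{E}^f$ is the forgetful functor described in the context. Then: (1) $\iota$ is exact; (2) $\iota$ preserves tensor products (pointwise tensor products over $\mathbb{F}_2$); (3) $\iota$ is fully faithful; (4) if $S$ is a simple object of $\mathcal{F}$, then $\iota(S)$ is a simple object of $\mathcal{F}_{quad}$.
   Context: All vector spaces are over $\mathbb{F}_2$. $\mathcal{E}$ is the category of all $\mathbb{F}_2$-vector spaces, $\mathcal{E}^f$ its full subcategory of finite-dimensional spaces, and $\mathcal{F}=\mathrm{Func}(\mathcal{E}^f,\mathcal{E})$. A quadratic form on a finite-dimensional $V$ is a map $q:V\to\mathbb{F}_2$ such that $B(x,y)=q(x+y)+q(x)+q(y)$ is bilinear; $(V,q)$ is non-degenerate if $\{v: B(v,w)=0\ \forall w\}=0$. $\mathcal{E}_q$ is the category whose objects are finite-dimensional non-degenerate quadratic spaces and whose morphisms are linear maps preserving the quadratic forms (these are injective). For $f:V\to W$ in $\mathcal{E}_q$, $W=f(V)\perp V'$ with $V'$ the orthogonal complement of $f(V)$. Pseudo push-out: given $f:V\to W=f(V)\perp V'$ and $g:V\to X=g(V)\perp V''$ in $\mathcal{E}_q$, set $W\perp_V X=V\perp V'\perp V''$, with the maps $W\to V\perp V'\perp V''$, $f(v)+v'\mapsto v+v'$, and $X\to V\perp V'\perp V''$, $g(v)+v''\mapsto v+v''$. The category $\mathcal{T}_q$: objects are those of $\mathcal{E}_q$;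 a morphism $V\to W$ is represented by a diagram $V\xrightarrow{f}X\xleftarrow{g}W$ in $\mathcal{E}_q$, written $[V\xrightarrow{f}X\xleftarrow{g}W]$; two such diagrams $[V\to X_1\leftarrow W]$, $[V\to X_2\leftarrow W]$ are identified under the equivalence relation generated by: there exists a morphism $\alpha:X_1\to X_2$ in $\mathcal{E}_q$ making both triangles commute. Composition of $[V\to X_1\leftarrow W]$ followed by $[W\to X_2\leftarrow Y]$ is $[V\to X_1\perp_W X_2\leftarrow Y]$ using the pseudo push-out of $X_1\leftarrow W\to X_2$. Then $\mathcal{F}_{quad}=\mathrm{Func}(\mathcal{T}_q,\mathcal{E})$. The functor $\epsilon:\mathcal{T}_q\to\mathcal{E}^f$ sends $V$ to its underlying vector space and $[V\xrightarrow{f}X\xleftarrow{g}W]$ to $p_g\circ f$, where, writing $X=g(W)\perp W'$, $p_g:X\to W$ is the orthogonal projection onto $g(W)$ followed by $g^{-1}$ (this is well defined and functorial). *)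

From HB Require Import structures.
From mathcomp Require Import all_boot all_order all_algebra.
Unset Strict Implicit.
Unset Printing Implicit Defensive.
Import GRing.Theory.
Local Open Scope ring_scope.

Notation F2 := 'F_2.

Definition is_lin (U W : lmodType F2) (h : U -> W) : Prop :=
  forall (a : F2) (x y : U), h (a *: x + y) = a *: h x + h y.

Definition is_bilin (U W T : lmodType F2) (b : U -> W -> T) : Prop :=
  (forall w, is_lin U T (fun u => b u w)) /\ (forall u, is_lin W T (b u)).

Definition is_tensor (U W T : lmodType F2) (b : U -> W -> T) : Prop :=
  is_bilin U W T b /\
  forall (Z : lmodType F2) (c : U -> W -> Z), is_bilin U W Z c ->
    exists h : T -> Z,
      [/\ is_lin T Z h, (forall u w, h (b u w) = c u w) &
          forall h' : T -> Z, is_lin T Z h' -> (forall u w, h' (b u w) = c u w) ->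
            forall t, h' t = h t].

(* The category F = Func(E^f, E).  E^f is represented by its skeleton:  *)
(* objects n : nat (standing for F2^n = 'rV_n), morphisms m -> n the    *)
(* matrices 'M_(m,n) acting on row vectors (v |-> v *m A), composition  *)
(* of A then B being A *m B.                                            *)
Record Ffun := {
  Fob : nat -> lmodType F2;
  Fmor : forall m n, 'M[F2]_(m, n) -> Fob m -> Fob n;
  Fmor_lin : forall m n (A : 'M[F2]_(m, n)), is_lin (Fob m) (Fob n) (Fmor m n A);
  Fmor_id : forall n (x : Fob n), Fmor n n (1%:M : 'M[F2]_n) x = x;
  Fmor_comp : forall m n p (A : 'M[F2]_(m, n)) (B : 'M[F2]_(n, p)) x,
      Fmor m p (A *m B) x = Fmor n p B (Fmor m n A x)
}.
Arguments Fmor f {m n} A _.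

Definition Fnat (F G : Ffun) (eta : forall n, Fob F n -> Fob G n) : Prop :=
  (forall n, is_lin _ _ (eta n)) /\
  forall m n (A : 'M[F2]_(m, n)) x, eta n (Fmor F A x) = Fmor G A (eta m x).

Definition Fexact (F G H : Ffun) (eta : forall n, Fob F n -> Fob G n)
    (theta : forall n, Fob G n -> Fob H n) : Prop :=
  forall n (y : Fob G n), theta n y = 0 <-> exists x, eta n x = y.

Definition Ftensor (F G H : Ffun) (b : forall n, Fob F n -> Fob G n -> Fob H n)
  : Prop :=
  (forall n, is_tensor _ _ _ (b n)) /\
  forall m n (A : 'M[F2]_(m, n)) x y,
    Fmor H A (b m x y) = b n (Fmor F A x) (Fmor G A y).

Definition Fsubfunctor (F : Ffun) (S : forall n, Fob F n -> Prop) : Prop :=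
  [/\ forall n, S n 0,
      forall n (a : F2) x y, S n x -> S n y -> S n (a *: x + y) &
      forall m n (A : 'M[F2]_(m, n)) x, S m x -> S n (Fmor F A x)].

Definition Fsimple (F : Ffun) : Prop :=
  (exists n (x : Fob F n), x <> 0) /\
  forall S, Fsubfunctor F S ->
    (forall n x, S n x -> x = 0) \/ (forall n x, S n x).

(* Quadratic spaces.  A finite-dimensional space is F2^n = 'rV_n.       *)
Definition bform n (q : 'rV[F2]_n -> F2) (x y : 'rV[F2]_n) : F2 :=
  q (x + y) + q x + q y.

Definition is_quadratic n (q : 'rV[F2]_n -> F2) : Prop :=
  (forall (a : F2) x y z, bform n q (a *: x + y) z = a * bform n q x z + bform n q y z) /\
  (forall (a : F2) x y z, bform n q z (a *: x + y) = a * bform n q z x + bform n q z y).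

Definition nondegenerate n (q : 'rV[F2]_n -> F2) : Prop :=
  forall v, (forall w, bform n q v w = 0) -> v = 0.

(* objects of E_q (and of T_q) *)
Record qspace := {
  qdim : nat;
  qf : 'rV[F2]_qdim -> F2;
  qf_quad : is_quadratic qdim qf;
  qf_nondeg : nondegenerate qdim qf
}.

Record qmor (V W : qspace) := {
  qmat : 'M[F2]_(qdim V, qdim W);
  qmat_pres : forall v, qf W (v *m qmat) = qf V v
}.
Arguments qmat {V W} _.

(* p_g : X -> W for g : W -> X in E_q: orthogonal projection onto g(W)
   followed by g^{-1}; p_g x is the unique w with
   B_W(w, w') = B_X(x, g w') for all w'. *)
Definition proj_g (W X : qspace) (g : qmor W X) (x : 'rV[F2]_(qdim X))
  : 'rV[F2]_(qdim W) :=
  odflt 0 [pick w : 'rV[F2]_(qdim W) |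
             [forall w' : 'rV[F2]_(qdim W),
                bform _ (qf W) w w' == bform _ (qf X) x (w' *m qmat g)]].

(* epsilon([V -f-> X <-g- W]) = p_g o f, as a matrix *)
Definition eps (V W X : qspace) (f : qmor V X) (g : qmor W X)
  : 'M[F2]_(qdim V, qdim W) :=
  lin1_mx (fun v => proj_g W X g (v *m qmat f)).

(* Functors T_q -> E, given by their action on objects and on the
   representing diagrams [V -f-> X <-g- W] of morphisms of T_q.  The
   notions below (natural transformations, exactness, tensor products,
   subfunctors, simplicity) only use this data. *)
Record Qdata := {
  Qob : qspace -> lmodType F2;
  Qmor : forall V W X, qmor V X -> qmor W X -> Qob V -> Qob W
}.
Arguments Qmor q {V W X} _ _ _.

Definition Qnat (P Q : Qdata) (th : forall V, Qob P V -> Qob Q V) : Prop :=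
  (forall V, is_lin _ _ (th V)) /\
  forall V W X (f : qmor V X) (g : qmor W X) x,
    th W (Qmor P f g x) = Qmor Q f g (th V x).

Definition Qexact (P Q R : Qdata) (eta : forall V, Qob P V -> Qob Q V)
    (theta : forall V, Qob Q V -> Qob R V) : Prop :=
  forall V (y : Qob Q V), theta V y = 0 <-> exists x, eta V x = y.

Definition Qtensor (P Q R : Qdata) (b : forall V, Qob P V -> Qob Q V -> Qob R V)
  : Prop :=
  (forall V, is_tensor _ _ _ (b V)) /\
  forall V W X (f : qmor V X) (g : qmor W X) x y,
    Qmor R f g (b V x y) = b W (Qmor P f g x) (Qmor Q f g y).

Definition Qsubfunctor (P : Qdata) (S : forall V, Qob P V -> Prop) : Prop :=
  [/\ forall V, S V 0,
      forall V (a : F2) x y, S V x -> S V y -> S V (a *: x + y) &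
      forall V W X (f : qmor V X) (g : qmor W X) x, S V x -> S W (Qmor P f g x)].

Definition Qsimple (P : Qdata) : Prop :=
  (exists V (x : Qob P V), x <> 0) /\
  forall S, Qsubfunctor P S ->
    (forall V x, S V x -> x = 0) \/ (forall V x, S V x).

Definition iotaQ (F : Ffun) : Qdata :=
  {| Qob := fun V => Fob F (qdim V);
     Qmor := fun V W X f g => Fmor F (eps V W X f g) : Fob F (qdim V) -> Fob F (qdim W) |}.

Definition iota_nat (F G : Ffun) (eta : forall n, Fob F n -> Fob G n)
  : forall V, Qob (iotaQ F) V -> Qob (iotaQ G) V :=
  fun V => eta (qdim V).
Arguments iota_nat {F G} eta V _.

(* Every linear map A : V -> W between the underlying spaces of two
   non-degenerate quadratic spaces is epsilon of a morphism of T_q: in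
   X = V ⊥ W ⊥ W the map v |-> (v, vA, vA) is an isometry since q_W(vA)
   cancels with itself in characteristic 2, and projecting along the middle
   copy of W gives back vA.  Moreover every F2^n is a retract of the
   hyperbolic space H_n = F2^n ⊕ F2^n.  Hence a subfunctor of F o epsilon, or
   a natural transformation F o epsilon -> G o epsilon, is the same thing as
   one between F and G, which gives full faithfulness and preservation of
   simple objects; exactness and tensor products are computed pointwise. *)
From Pilot Require Import Defs.
From mathcomp Require Import all_boot all_order all_algebra.
From mathcomp Require Import ring.
Import GRing.Theory.
Local Open Scope ring_scope.

Lemma addxx_F2 (V : lmodType F2) (x : V) : x + x = 0.
Proof.
by rewrite -[x]scale1r -scalerDl (addrr_pchar2 (pchar_Fp (isT : prime 2))) scale0r.
Qed.

Lemma additive_0 (U W : zmodType) (h : U -> W) :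
  (forall x y, h (x + y) = h x + h y) -> h 0 = 0.
Proof. by move=> hD; apply: (@addrI _ (h 0)); rewrite -hD !addr0. Qed.

Section QuadraticForm.
Variables (n : nat) (q : 'rV[F2]_n -> F2).
Hypothesis q_quad : is_quadratic n q.

Lemma bformDl x y z : bform n q (x + y) z = bform n q x z + bform n q y z.
Proof. by have := q_quad.1 1 x y z; rewrite scale1r mul1r. Qed.

Lemma bformDr x y z : bform n q z (x + y) = bform n q z x + bform n q z y.
Proof. by have := q_quad.2 1 x y z; rewrite scale1r mul1r. Qed.

Lemma bform0r z : bform n q z 0 = 0.
Proof. by apply: additive_0 => x y; apply: bformDr. Qed.

Lemma quad0 : q 0 = 0.
Proof. by have := bform0r 0; rewrite /bform addr0 -addrA (@addxx_F2 F2^o) addr0. Qed.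

End QuadraticForm.
Arguments bformDl {n q}.
Arguments bform0r {n q}.
Arguments quad0 {n q}.

Lemma proj_gE (W X : qspace) (g : qmor W X) x u :
  (forall w', bform _ (qf W) u w' = bform _ (qf X) x (w' *m qmat g)) ->
  proj_g W X g x = u.
Proof.
move=> hu; rewrite /proj_g; case: pickP => [w /forallP hw | hnone]; last first.
  by have := hnone u; rewrite (introT forallP (fun w' => introT eqP (hu w'))).
apply: (addIr u); rewrite addxx_F2.
apply: (qf_nondeg W) => w'.
by rewrite (bformDl (qf_quad W)) hu (eqP (hw w')) (@addxx_F2 F2^o).
Qed.

Definition osum_form (V W : qspace) (x : 'rV[F2]_(qdim V + qdim W)) : F2 :=
  qf V (lsubmx x) + qf W (rsubmx x).

Lemma bform_osum V W x y : bform _ (osum_form V W) x y =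
  bform _ (qf V) (lsubmx x) (lsubmx y) + bform _ (qf W) (rsubmx x) (rsubmx y).
Proof. rewrite /bform /osum_form !linearD /=; ring. Qed.

Lemma osum_quad V W : is_quadratic _ (osum_form V W).
Proof.
split=> a x y z; rewrite !bform_osum !linearP /=
  ?(qf_quad V).1 ?(qf_quad W).1 ?(qf_quad V).2 ?(qf_quad W).2; ring.
Qed.

Lemma osum_nondeg V W : Defs.nondegenerate _ (osum_form V W).
Proof.
move=> v hv.
have hl : lsubmx v = 0.
  apply: (qf_nondeg V) => w; have := hv (row_mx w 0).
  by rewrite bform_osum row_mxKl row_mxKr (bform0r (qf_quad W)) addr0.
have hr : rsubmx v = 0.
  apply: (qf_nondeg W) => w; have := hv (row_mx 0 w).
  by rewrite bform_osum row_mxKl row_mxKr (bform0r (qf_quad V)) add0r.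
by rewrite -[v]hsubmxK hl hr row_mx0.
Qed.

Definition osum (V W : qspace) : qspace :=
  {| qdim := qdim V + qdim W; qf := osum_form V W;
     qf_quad := osum_quad V W; qf_nondeg := osum_nondeg V W |}.

Definition dot {n} (u v : 'rV[F2]_n) : F2 := (u *m v^T) 0 0.

Lemma dotDl n (u u' v : 'rV_n) : dot (u + u') v = dot u v + dot u' v.
Proof. by rewrite /dot mulmxDl mxE. Qed.
Lemma dotDr n (u v v' : 'rV_n) : dot u (v + v') = dot u v + dot u v'.
Proof. by rewrite /dot linearD mulmxDr mxE. Qed.
Lemma dotZl n a (u v : 'rV_n) : dot (a *: u) v = a * dot u v.
Proof. by rewrite /dot -scalemxAl mxE. Qed.
Lemma dotZr n a (u v : 'rV_n) : dot u (a *: v) = a * dot u v.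
Proof. by rewrite /dot linearZ -scalemxAr mxE. Qed.

Definition hyp_form n (x : 'rV[F2]_(n + n)) : F2 := dot (lsubmx x) (rsubmx x).

Lemma bform_hyp n x y : bform _ (hyp_form n) x y =
  dot (lsubmx x) (rsubmx y) + dot (lsubmx y) (rsubmx x).
Proof.
rewrite /bform /hyp_form !linearD /= !dotDl !dotDr.
set a := dot _ _; set b := dot _ _; set c := dot _ _; set d := dot _ _.
transitivity (b + c + (a + a) + (d + d)); first ring.
by rewrite !(@addxx_F2 F2^o) !addr0.
Qed.

Lemma hyp_quad n : is_quadratic _ (hyp_form n).
Proof.
split=> a x y z; rewrite !bform_hyp !linearP /= ?dotDl ?dotDr ?dotZl ?dotZr; ring.
Qed.

Lemma hyp_nondeg n : Defs.nondegenerate _ (hyp_form n).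
Proof.
move=> v hv.
have hl : lsubmx v = 0.
  apply/rowP => i; have := hv (row_mx 0 (delta_mx 0 i)).
  rewrite bform_hyp row_mxKl row_mxKr /dot trmx_delta -colE mul0mx.
  by rewrite !mxE addr0 => ->.
have hr : rsubmx v = 0.
  apply/rowP => i; have := hv (row_mx (delta_mx 0 i) 0).
  rewrite bform_hyp row_mxKl row_mxKr /dot linear0 mulmx0 -rowE.
  by rewrite !mxE add0r => ->.
by rewrite -[v]hsubmxK hl hr row_mx0.
Qed.

Definition hyperbolic (n : nat) : qspace :=
  {| qdim := n + n; qf := hyp_form n;
     qf_quad := hyp_quad n; qf_nondeg := hyp_nondeg n |}.

Section GraphDiagram.
Variables (V W : qspace) (A : 'M[F2]_(qdim V, qdim W)).

Definition graph_space : qspace := osum V (osum W W).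

Definition graph_mx : 'M[F2]_(qdim V, qdim graph_space) := row_mx 1%:M (row_mx A A).
Definition mid_mx : 'M[F2]_(qdim W, qdim graph_space) := row_mx 0 (row_mx 1%:M 0).

Lemma graph_mx_isometry v : qf graph_space (v *m graph_mx) = qf V v.
Proof.
rewrite /= /osum_form /graph_mx !mul_mx_row row_mxKl row_mxKr mulmx1 /=.
by rewrite /osum_form row_mxKl row_mxKr (@addxx_F2 F2^o) addr0.
Qed.

Lemma mid_mx_isometry w : qf graph_space (w *m mid_mx) = qf W w.
Proof.
rewrite /= /osum_form /mid_mx !mul_mx_row row_mxKl row_mxKr mulmx1 /=.
by rewrite /osum_form row_mxKl row_mxKr !mulmx0 !(quad0 (qf_quad _)) add0r addr0.
Qed.

Definition graph_mor : qmor V graph_space := Build_qmor _ _ _ graph_mx_isometry.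
Definition mid_mor : qmor W graph_space := Build_qmor _ _ _ mid_mx_isometry.

Lemma bform_graph_mid v w :
  bform _ (qf graph_space) (v *m graph_mx) (w *m mid_mx) = bform _ (qf W) (v *m A) w.
Proof.
rewrite bform_osum /graph_mx /mid_mx !mul_mx_row !row_mxKl !row_mxKr.
rewrite mulmx1 mulmx0 (bform0r (qf_quad V)) add0r bform_osum !row_mxKl !row_mxKr.
by rewrite mulmx1 mulmx0 (bform0r (qf_quad W)) addr0.
Qed.

Lemma eps_graph : eps V W graph_space graph_mor mid_mor = A.
Proof.
apply/matrixP => i j; rewrite /eps mxE (@proj_gE _ _ _ _ (delta_mx 0 i *m A)).
  by rewrite -rowE mxE.
by move=> w; rewrite bform_graph_mid.
Qed.

End GraphDiagram.

Lemma eps_surjective {V W : qspace} (A : 'M[F2]_(qdim V, qdim W)) :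
  exists X (f : qmor V X) (g : qmor W X), eps V W X f g = A.
Proof. by exists (graph_space V W), (graph_mor V W A), (mid_mor V W); exact: eps_graph. Qed.

Definition hyp_incl n : 'M[F2]_(n, n + n) := pid_mx n.
Definition hyp_retr n : 'M[F2]_(n + n, n) := pid_mx n.

Lemma hyp_incl_retr n : hyp_incl n *m hyp_retr n = 1%:M.
Proof. by rewrite mul_pid_mx minnn (minn_idPr (leq_addr n n)) pid_mx_1. Qed.

Section FunctorFacts.
Variable F : Ffun.

Lemma Fmor0 m n (A : 'M[F2]_(m, n)) : Fmor F A 0 = 0.
Proof. by apply: additive_0 => x y; have := Fmor_lin F _ _ A 1 x y; rewrite !scale1r. Qed.

Lemma Fmor_hyp_retract n x : Fmor F (hyp_retr n) (Fmor F (hyp_incl n) x) = x.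
Proof. by rewrite -Fmor_comp hyp_incl_retr Fmor_id. Qed.

Lemma Fmor_hyp_conj m n (A : 'M[F2]_(m, n)) x :
  Fmor F (hyp_incl n) (Fmor F A x) =
  Fmor F (hyp_retr m *m A *m hyp_incl n) (Fmor F (hyp_incl m) x).
Proof. by rewrite -!Fmor_comp !mulmxA hyp_incl_retr mul1mx. Qed.

End FunctorFacts.

Lemma Qnat_iotaQ_mx {F G th} : Qnat (iotaQ F) (iotaQ G) th ->
  forall V W (A : 'M[F2]_(qdim V, qdim W)) x, th W (Fmor F A x) = Fmor G A (th V x).
Proof. by move=> [_ thN] V W A x; have [X [f [g <-]]] := eps_surjective A; apply: thN. Qed.

Lemma Qsubfunctor_iotaQ_mx {S T} : Qsubfunctor (iotaQ S) T ->
  forall V W (A : 'M[F2]_(qdim V, qdim W)) x, T V x -> T W (Fmor S A x).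
Proof. by move=> [_ _ TM] V W A x; have [X [f [g <-]]] := eps_surjective A; apply: TM. Qed.

Lemma iotaQ_exact F G H eta theta : Fexact F G H eta theta ->
  Qexact (iotaQ F) (iotaQ G) (iotaQ H) (iota_nat eta) (iota_nat theta).
Proof. by move=> ex V; apply: ex. Qed.

Lemma iotaQ_tensor F G H b : Ftensor F G H b ->
  Qtensor (iotaQ F) (iotaQ G) (iotaQ H) (fun V => b (qdim V)).
Proof. by move=> [bT bM]; split=> [V | V W X f g]; [apply: bT | apply: bM]. Qed.

Lemma iota_nat_faithful F G (eta eta' : forall n, Fob F n -> Fob G n) :
  Fnat F G eta -> Fnat F G eta' ->
  (forall V x, iota_nat eta V x = iota_nat eta' V x) -> forall n x, eta n x = eta' n x.
Proof.
move=> [_ etaN] [_ eta'N] eq_iota n x.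
rewrite -(Fmor_hyp_retract F n x) etaN eta'N.
by congr (Fmor G _ _); apply: (eq_iota (hyperbolic n)).
Qed.

Lemma iota_nat_full F G th : Qnat (iotaQ F) (iotaQ G) th ->
  exists eta : forall n, Fob F n -> Fob G n,
    Fnat F G eta /\ forall V x, iota_nat eta V x = th V x.
Proof.
move=> thQ; have thN := Qnat_iotaQ_mx thQ.
exists (fun n x => Fmor G (hyp_retr n) (th (hyperbolic n) (Fmor F (hyp_incl n) x))).
split; last first.
  by move=> V x; rewrite /iota_nat (thN V (hyperbolic _)) Fmor_hyp_retract.
split=> [n a x y | m n A x]; first by rewrite !Fmor_lin thQ.1 Fmor_lin.
rewrite Fmor_hyp_conj (thN (hyperbolic m) (hyperbolic n)) -!Fmor_comp.
by congr (Fmor G _ _); rewrite -!mulmxA hyp_incl_retr mulmx1.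
Qed.

Lemma iotaQ_simple S : Fsimple S -> Qsimple (iotaQ S).
Proof.
move=> [[n [x x_neq0]] S_simple]; split.
  exists (hyperbolic n), (Fmor S (hyp_incl n) x) => incl_x0; apply: x_neq0.
  by rewrite -(Fmor_hyp_retract S n x) /= incl_x0 Fmor0.
move=> T T_sub; have TM := Qsubfunctor_iotaQ_mx T_sub.
have T_hyp V y : T V y <-> T (hyperbolic (qdim V)) (Fmor S (hyp_incl _) y).
  split; first exact: TM.
  by move=> /(TM (hyperbolic _) V (hyp_retr _)); rewrite Fmor_hyp_retract.
have [T0 TD _] := T_sub.
have sub : Fsubfunctor S (fun n y => T (hyperbolic n) (Fmor S (hyp_incl n) y)).
  split=> [k | k a y z Ty Tz | k l A y Ty]; first by rewrite Fmor0.
    by rewrite Fmor_lin; apply: TD.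
  by rewrite Fmor_hyp_conj; apply: (TM (hyperbolic k)).
by case: (S_simple _ sub) => [T_0 | T_all]; [left | right] => V y;
  [move=> /T_hyp /T_0 | apply/T_hyp/T_all].
Qed.

Theorem theorem3p1 :
  (* (1) iotaQ is exact *)
  (forall (F G H : Ffun) (eta : forall n, Fob F n -> Fob G n)
          (theta : forall n, Fob G n -> Fob H n),
     Fnat F G eta -> Fnat G H theta -> Fexact F G H eta theta ->
     Qexact (iotaQ F) (iotaQ G) (iotaQ H) (iota_nat eta) (iota_nat theta)) /\
  (* (2) iotaQ preserves (pointwise) tensor products *)
  (forall (F G H : Ffun) (b : forall n, Fob F n -> Fob G n -> Fob H n),
     Ftensor F G H b ->
     Qtensor (iotaQ F) (iotaQ G) (iotaQ H) (fun V => b (qdim V))) /\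
  (* (3) iotaQ is fully faithful *)
  (forall F G : Ffun,
     (forall eta eta' : forall n, Fob F n -> Fob G n,
        Fnat F G eta -> Fnat F G eta' ->
        (forall V x, iota_nat eta V x = iota_nat eta' V x) ->
        forall n x, eta n x = eta' n x) /\
     (forall th : forall V, Qob (iotaQ F) V -> Qob (iotaQ G) V,
        Qnat (iotaQ F) (iotaQ G) th ->
        exists eta : forall n, Fob F n -> Fob G n,
          Fnat F G eta /\ forall V x, iota_nat eta V x = th V x)) /\
  (* (4) iotaQ sends simple objects to simple objects *)
  (forall S : Ffun, Fsimple S -> Qsimple (iotaQ S)).
Proof.
split; first by move=> F G H eta theta _ _; apply: iotaQ_exact.
split; first exact: iotaQ_tensor.
split; last exact: iotaQ_simple.
by move=> F G; split; [apply: iota_nat_faithful | apply: iota_nat_full].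
Qed.
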